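(* For every $\beta\in\Psi^+$ and $i\in\{0,1\}$ there exist $a_1,a_2\in W({\rm G}_2)$, $j\in\{0,1\}$ and $t\in\mathbb{Z}$ such that $e_\beta e_i=\delta^ta_1e_ja_2$ in ${\rm Br}({\rm G}_2)$.
   Context: Let $\delta$ be an indeterminate. ${\rm Br}({\rm G}_2)$ is the $\mathbb{Z}[\delta^{\pm1}]$-algebra generated by $r_0,r_1,e_0,e_1$ subject to the following relations: - $r_0^2=r_1^2=1$; - $r_ie_i=e_ir_i=e_i$ for $i=0,1$; - $e_0^2=\delta^3e_0$ and $e_1^2=\delta e_1$; - $r_0e_1e_0=r_1e_0$ and $e_0e_1r_0=e_0r_1$; - $e_1r_0e_1r_0e_1=e_1$ and $e_1r_0e_1r_0r_1=e_1r_0r_1r_0$; - $e_0r_1e_0=\delta^2e_0$; - $r_1r_0e_1r_0e_1=r_0r_1r_0e_1$; - $(r_1r_0)^6=1$. Let $\Psi$ be a root system of type ${\rm G}_2$ with simple roots $\beta_0$ (short) and $\beta_1$ (long), and positive roots $\Psi^+=\{\beta_0,\beta_1,\beta_0+\beta_1,2\beta_0+\beta_1,3\beta_0+\beta_1,3\beta_0+2\beta_1\}$. $W({\rm G}_2)$ is generated by the reflections $s_0,s_1$ in $\beta_0,\beta_1$. The subgroup of units of ${\rm Br}({\rm G}_2)$ generated by $r_0,r_1$ is isomorphic to $W({\rm G}_2)$ via $r_i\mapsto s_i$, and elements of $W({\rm G}_2)$ are identified with their images. For $\beta\in\Psi^+$, choose $w\in W({\rm G}_2)$ and $k\in\{0,1\}$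 with $w\beta_k=\beta$, and set $e_\beta=we_kw^{-1}$. This is independent of the choice of $w$ and $k$. *)

From HB Require Import structures.
From mathcomp Require Import all_boot all_order all_algebra.
Set Implicit Arguments. Unset Strict Implicit. Unset Printing Implicit Defensive.
Import Order.TTheory GRing.Theory Num.Theory.
Local Open Scope ring_scope.

(* A root is encoded by its coordinates (c0, c1) in the basis beta_0 (short),
   beta_1 (long): c0 * beta_0 + c1 * beta_1.  Pairings with coroots:
   <beta_0, beta_0^v> = 2, <beta_1, beta_0^v> = -3,
   <beta_0, beta_1^v> = -1, <beta_1, beta_1^v> = 2. *)
Definition G2root := (int * int)%type.

Definition simple_root (k : 'I_2) : G2root :=
  if k == ord0 then (1%:Z, 0%:Z) else (0%:Z, 1%:Z).

(* s_i x = x - <x, beta_i^v> beta_i *)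
Definition refl (i : 'I_2) (x : G2root) : G2root :=
  if i == ord0 then (x.1 - (2 * x.1 - 3 * x.2), x.2)
  else (x.1, x.2 - (2 * x.2 - x.1)).

(* An element of W(G2) is given by a word [:: i1; ...; in] in the generators,
   standing for s_{i1} s_{i2} ... s_{in}. *)
Definition wact (w : seq 'I_2) (x : G2root) : G2root := foldr refl x w.

Definition pos_roots : seq G2root :=
  [:: (1%:Z, 0%:Z); (0%:Z, 1%:Z); (1%:Z, 1%:Z); (2%:Z, 1%:Z);
      (3%:Z, 1%:Z); (3%:Z, 2%:Z)].

(* A Z[delta^{+-1}]-algebra is a ring A together with a central unit d (the
   image of delta) with inverse dinv.  br_rels says that r0 r1 e0 e1 satisfy
   the defining relations of Br(G2).  An identity holds in Br(G2) iff it holds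
   for every such (A, d, r0, r1, e0, e1), Br(G2) being the universal one. *)
Definition br_rels (A : pzRingType) (d dinv r0 r1 e0 e1 : A) : Prop :=
     d * dinv = 1 /\ dinv * d = 1 /\ (forall x : A, d * x = x * d)
  /\ r0 * r0 = 1 /\ r1 * r1 = 1
  /\ r0 * e0 = e0 /\ e0 * r0 = e0 /\ r1 * e1 = e1 /\ e1 * r1 = e1
  /\ e0 * e0 = d ^+ 3 * e0 /\ e1 * e1 = d * e1
  /\ r0 * e1 * e0 = r1 * e0 /\ e0 * e1 * r0 = e0 * r1
  /\ e1 * r0 * e1 * r0 * e1 = e1 /\ e1 * r0 * e1 * r0 * r1 = e1 * r0 * r1 * r0
  /\ e0 * r1 * e0 = d ^+ 2 * e0
  /\ r1 * r0 * e1 * r0 * e1 = r0 * r1 * r0 * e1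
  /\ (r1 * r0) ^+ 6 = 1.

Definition gen (A : pzRingType) (x0 x1 : A) (i : 'I_2) : A :=
  if i == ord0 then x0 else x1.

Definition wev (A : pzRingType) (r0 r1 : A) (w : seq 'I_2) : A :=
  \prod_(i <- w) gen r0 r1 i.

Definition dpow (A : pzRingType) (d dinv : A) (t : int) : A :=
  match t with
  | Posz n => d ^+ n
  | Negz n => dinv ^+ n.+1
  end.

(* e_beta = w e_k w^{-1}, where w beta_k = beta; w^{-1} is the reversed word
   since the generators are involutions. *)
Definition ebeta (A : pzRingType) (r0 r1 e0 e1 : A) (w : seq 'I_2) (k : 'I_2) : A :=
  wev r0 r1 w * gen e0 e1 k * wev r0 r1 (rev w).

(* Since e_beta = w e_k w^-1, we have e_beta e_i = w (e_k w^-1 e_i), so it suffices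
   to write every e_k u e_i, u in W(G2), as a power of delta times a monomial with a
   single e_j; this holds for any word w, whether or not w beta_k = beta.  Since
   e_k r_k = e_k and r_i e_i = e_i, e_k u e_i only depends on the double coset
   <s_k> u <s_i> in the dihedral group W(G2) of order 12.  There are at most four
   such double cosets, and for a representative of each the required identity is a
   short computation with the defining relations. *)

From HB Require Import structures.
From mathcomp Require Import all_boot all_order all_algebra.
Import GRing.Theory.
Local Open Scope ring_scope.
Set Implicit Arguments.

Local Notation s0 := (ord0 : 'I_2).
Local Notation s1 := (ord_max : 'I_2).

Lemma ord2_cases (k : 'I_2) : k = s0 \/ k = s1.
Proof. by case: k => [[|[|]]] // ?; [left | right]; apply: val_inj. Qed.

Lemma gen_s0 (R : pzRingType) (x0 x1 : R) : gen x0 x1 s0 = x0.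
Proof. by []. Qed.

Lemma gen_s1 (R : pzRingType) (x0 x1 : R) : gen x0 x1 s1 = x1.
Proof. by []. Qed.

Lemma wev_nil (R : pzRingType) (r0 r1 : R) : wev r0 r1 [::] = 1.
Proof. exact: big_nil. Qed.

Lemma wev_cons (R : pzRingType) (r0 r1 : R) x u :
  wev r0 r1 (x :: u) = gen r0 r1 x * wev r0 r1 u.
Proof. exact: big_cons. Qed.

Lemma wev_cat (R : pzRingType) (r0 r1 : R) u v :
  wev r0 r1 (u ++ v) = wev r0 r1 u * wev r0 r1 v.
Proof. exact: big_cat. Qed.

Lemma eq_of_mulr (R : pzRingType) (a b : R) : (forall x, a * x = b * x) -> a = b.
Proof. by move=> /(_ 1); rewrite !mulr1. Qed.

(* (m, b) stands for (s1 s0)^m s0^b, with m < 6. *)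
Fixpoint dihedral_nf (u : seq 'I_2) : nat * bool :=
  if u is x :: u' then
    let: (m, b) := dihedral_nf u' in (((x != s0) + 5 * m) %% 6, ~~ b)%N
  else (0%N, false).

Lemma dihedral_nf_lt6 u : ((dihedral_nf u).1 < 6)%N.
Proof. by case: u => [|x u] //=; case: (dihedral_nf u) => m b; apply: ltn_mod. Qed.

Section Dihedral.
Variables (R : pzRingType) (r0 r1 : R).
Hypotheses (r0K : r0 * r0 = 1) (r1K : r1 * r1 = 1) (r1r0_6 : (r1 * r0) ^+ 6 = 1).

Let c := r1 * r0.

Let c_mod6 n : c ^+ n = c ^+ (n %% 6).
Proof. by rewrite {1}(divn_eq n 6) exprD mulnC exprM r1r0_6 expr1n mul1r. Qed.

Let c5 : c ^+ 5 = r0 * r1.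
Proof.
have cV : c * (r0 * r1) = 1 by rewrite /c mulrA -(mulrA r1) r0K mulr1 r1K.
by rewrite -[LHS]mulr1 -cV mulrA -exprSr r1r0_6 mul1r.
Qed.

Let r0cX m : r0 * c ^+ m = c ^+ (5 * m) * r0.
Proof.
have r0c : r0 * c = c ^+ 5 * r0 by rewrite c5 /c -!mulrA.
elim: m => [|m IHm]; first by rewrite mulr1 mul1r.
by rewrite exprSr mulrA IHm -mulrA r0c mulrA -exprD mulnSr addnC.
Qed.

Let gen_c x : gen r0 r1 x = c ^+ (x != s0) * r0.
Proof. by case: (ord2_cases x) => ->; rewrite /gen /= ?mul1r // expr1 -mulrA r0K mulr1. Qed.

Let wev_dihedral_nf u : wev r0 r1 u = c ^+ (dihedral_nf u).1 * r0 ^+ (dihedral_nf u).2.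
Proof.
elim: u => [|x u IHu]; first by rewrite wev_nil mulr1.
rewrite wev_cons IHu /=; case: (dihedral_nf u) => m b /=.
rewrite gen_c -mulrA (mulrA r0) r0cX -!mulrA mulrA -exprD -c_mod6.
by congr (_ * _); case: b; rewrite /= ?expr1 ?expr0 ?mulr1.
Qed.

Lemma wev_dihedral_nf_eq u v :
  dihedral_nf u = dihedral_nf v -> wev r0 r1 u = wev r0 r1 v.
Proof. by rewrite !wev_dihedral_nf => ->. Qed.

End Dihedral.

(* The relations are stated with an arbitrary right factor x, so that they rewrite
   inside right-nested products such as those produced by wev. *)
Section BrauerRelations.
Variables (A : pzRingType) (d dinv r0 r1 e0 e1 : A).
Hypothesis rels : br_rels d dinv r0 r1 e0 e1.

Ltac by_rels := rewrite !mulrA; move: rels; rewrite /br_rels;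
  let h := fresh in intro h; decompose record h;
  match goal with h : ?l = _ |- ?l * _ = _ => by rewrite h ?mul1r ?mulrA end.

Lemma dC x : d * x = x * d. Proof. by move: rels; rewrite /br_rels; firstorder. Qed.
Let r0r0_1 : r0 * r0 = 1. Proof. by move: rels; rewrite /br_rels; tauto. Qed.
Let r1r1_1 : r1 * r1 = 1. Proof. by move: rels; rewrite /br_rels; tauto. Qed.
Let r1r0_6 : (r1 * r0) ^+ 6 = 1. Proof. by move: rels; rewrite /br_rels; tauto. Qed.
Let r0K x : r0 * (r0 * x) = x. Proof. by_rels. Qed.
Let r1K x : r1 * (r1 * x) = x. Proof. by_rels. Qed.
Let r0e0 x : r0 * (e0 * x) = e0 * x. Proof. by_rels. Qed.
Let e0r0 x : e0 * (r0 * x) = e0 * x. Proof. by_rels. Qed.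
Let r1e1 x : r1 * (e1 * x) = e1 * x. Proof. by_rels. Qed.
Let e1r1 x : e1 * (r1 * x) = e1 * x. Proof. by_rels. Qed.
Lemma e0e0 x : e0 * (e0 * x) = d ^+ 3 * (e0 * x). Proof. by_rels. Qed.
Lemma e1e1 x : e1 * (e1 * x) = d * (e1 * x). Proof. by_rels. Qed.
Let r0e1e0 x : r0 * (e1 * (e0 * x)) = r1 * (e0 * x). Proof. by_rels. Qed.
Let e0e1r0 x : e0 * (e1 * (r0 * x)) = e0 * (r1 * x). Proof. by_rels. Qed.
Let e1r0e1r0e1 x : e1 * (r0 * (e1 * (r0 * (e1 * x)))) = e1 * x. Proof. by_rels. Qed.
Let e1r0e1r0r1 x : e1 * (r0 * (e1 * (r0 * (r1 * x)))) = e1 * (r0 * (r1 * (r0 * x))).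
Proof. by_rels. Qed.
Lemma e0r1e0 x : e0 * (r1 * (e0 * x)) = d ^+ 2 * (e0 * x). Proof. by_rels. Qed.
Let r1r0e1r0e1 x : r1 * (r0 * (e1 * (r0 * (e1 * x)))) = r0 * (r1 * (r0 * (e1 * x))).
Proof. by_rels. Qed.

Let dCl x y : x * (d * y) = d * (x * y).
Proof. by rewrite mulrA -dC -mulrA. Qed.

Lemma e1e0 x : e1 * (e0 * x) = r0 * (r1 * (e0 * x)).
Proof. by rewrite -r0e1e0 r0K. Qed.

Lemma e0e1 x : e0 * (e1 * x) = e0 * (r1 * (r0 * x)).
Proof. by rewrite -e0e1r0 r0K. Qed.

Let r1r0r1e0 x : r1 * (r0 * (r1 * (e0 * x))) = e1 * (e0 * x).
Proof. by rewrite -e1e0 r1e1. Qed.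

Let e0r1r0r1 x : e0 * (r1 * (r0 * (r1 * x))) = e0 * (e1 * x).
Proof. by rewrite -e0e1 e1r1. Qed.

Let e0e1e0 x : e0 * (e1 * (e0 * x)) = d ^+ 2 * (e0 * x).
Proof. by rewrite e0e1 r0e0 e0r1e0. Qed.

Lemma e1r0e1 x : e1 * (r0 * (e1 * x)) = e1 * (r0 * (r1 * (r0 * (r1 * (r0 * x))))).
Proof. by rewrite -e1r0e1r0r1 r1K r0K. Qed.

Let e1r0e1l x : e1 * (r0 * (e1 * x)) = r0 * (r1 * (r0 * (r1 * (r0 * (e1 * x))))).
Proof. by rewrite -r1r0e1r0e1 r1K r0K. Qed.

Lemma e0r1r0r1e0 x : e0 * (r1 * (r0 * (r1 * (e0 * x)))) = d ^+ 2 * (e0 * x).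
Proof. by rewrite r1r0r1e0 e0e1e0. Qed.

Lemma e0r1r0r1r0r1e0 x :
  e0 * (r1 * (r0 * (r1 * (r0 * (r1 * (e0 * x)))))) = d ^+ 3 * (e0 * x).
Proof. by rewrite e0r1r0r1 -e1e0 e1e1 dCl e0e1e0 mulrA -exprS. Qed.

Lemma e1r0r1r0e1 x : e1 * (r0 * (r1 * (r0 * (e1 * x)))) = e1 * x.
Proof. by rewrite -e1r0e1r0r1 r1e1 e1r0e1r0e1. Qed.

Lemma e1r0r1r0r1r0e1 x :
  e1 * (r0 * (r1 * (r0 * (r1 * (r0 * (e1 * x)))))) =
  d * (e1 * (r0 * (r1 * (r0 * (r1 * (r0 * x)))))).
Proof. by rewrite -e1r0e1r0r1 r1K r0K e1e1 !dCl e1r0e1. Qed.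

Lemma e0r1r0e1 x : e0 * (r1 * (r0 * (e1 * x))) = d * (e0 * (r1 * (r0 * x))).
Proof. by rewrite -e0e1 e1e1 dCl e0e1. Qed.

Lemma e0r1r0r1r0e1 x : e0 * (r1 * (r0 * (r1 * (r0 * (e1 * x))))) = e0 * (r1 * (r0 * x)).
Proof. by rewrite e0r1r0r1 e1r0e1 e0e1r0 r1K e0r0. Qed.

Lemma e1r0r1e0 x : e1 * (r0 * (r1 * (e0 * x))) = d * (r0 * (r1 * (e0 * x))).
Proof. by rewrite -e1e0 e1e1. Qed.

Lemma e1r0r1r0r1e0 x : e1 * (r0 * (r1 * (r0 * (r1 * (e0 * x))))) = r0 * (r1 * (e0 * x)).
Proof. by rewrite r1r0r1e0 e1r0e1l r0e1e0 r1K r0e0. Qed.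

Lemma gen_e_r k : gen e0 e1 k * gen r0 r1 k = gen e0 e1 k.
Proof.
by case: (ord2_cases k) => ->; rewrite /gen /= -[X in X = _]mulr1 -mulrA ?e0r0 ?e1r1 mulr1.
Qed.

Lemma gen_r_e k : gen r0 r1 k * gen e0 e1 k = gen e0 e1 k.
Proof.
by case: (ord2_cases k) => ->; rewrite /gen /= -[X in X = _]mulr1 -mulrA ?r0e0 ?r1e1 mulr1.
Qed.

Lemma br_wev_nf_eq u v : dihedral_nf u = dihedral_nf v -> wev r0 r1 u = wev r0 r1 v.
Proof. exact: wev_dihedral_nf_eq. Qed.

End BrauerRelations.

Definition sandwich_reduces (k i : 'I_2) (u : seq 'I_2) : Prop :=
  exists (a1 a2 : seq 'I_2) (j : 'I_2) (n : nat),
    forall (A : pzRingType) (d dinv r0 r1 e0 e1 : A), br_rels d dinv r0 r1 e0 e1 ->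
      gen e0 e1 k * wev r0 r1 u * gen e0 e1 i
      = d ^+ n * wev r0 r1 a1 * gen e0 e1 j * wev r0 r1 a2.

Lemma sandwich_reduces_nf k i u v :
  dihedral_nf u = dihedral_nf v -> sandwich_reduces k i u -> sandwich_reduces k i v.
Proof.
move=> uv [a1 [a2 [j [n red]]]]; exists a1, a2, j, n => A d dinv r0 r1 e0 e1 rels.
by rewrite -(br_wev_nf_eq rels _ _ uv) (red A d dinv r0 r1 e0 e1 rels).
Qed.

Lemma sandwich_reduces_cons k i u : sandwich_reduces k i u -> sandwich_reduces k i (k :: u).
Proof.
move=> [a1 [a2 [j [n red]]]]; exists a1, a2, j, n => A d dinv r0 r1 e0 e1 rels.
by rewrite wev_cons mulrA (gen_e_r rels) (red A d dinv r0 r1 e0 e1 rels).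
Qed.

Lemma sandwich_reduces_rcons k i u : sandwich_reduces k i u -> sandwich_reduces k i (rcons u i).
Proof.
move=> [a1 [a2 [j [n red]]]]; exists a1, a2, j, n => A d dinv r0 r1 e0 e1 rels.
rewrite -cats1 wev_cat wev_cons wev_nil mulr1 mulrA -(mulrA _ (gen r0 r1 i)).
by rewrite (gen_r_e rels) (red A d dinv r0 r1 e0 e1 rels).
Qed.

(* Representatives of the double cosets <s_k> \ W(G2) / <s_i>. *)
Definition dcoset_reps (k i : 'I_2) : seq (seq 'I_2) :=
  if k == s0 then
    if i == s0 then [:: [::]; [:: s1]; [:: s1; s0; s1]; [:: s1; s0; s1; s0; s1]]
    else [:: [::]; [:: s1; s0]; [:: s1; s0; s1; s0]]
  else
    if i == s0 then [:: [::]; [:: s0; s1]; [:: s0; s1; s0; s1]]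
    else [:: [::]; [:: s0]; [:: s0; s1; s0]; [:: s0; s1; s0; s1; s0]].

Tactic Notation "sandwich_by" constr(a1) constr(a2) constr(j) constr(n) constr(lem) :=
  exists a1, a2, j, n => ? ? ? ? ? ? ? ?; apply: eq_of_mulr => ?;
  rewrite ?gen_s0 ?gen_s1 ?wev_cons !wev_nil ?expr0 ?expr1;
  (* locked, so that reassociation does not unfold d ^+ n into a product *)
  try rewrite [_ ^+ _]lock; rewrite -!mulrA !mul1r; try rewrite -lock;
  match goal with rels : br_rels _ _ _ _ _ _ |- _ => exact: lem rels _ end.

Lemma sandwich_reduces_reps k i u : u \in dcoset_reps k i -> sandwich_reduces k i u.
Proof.
case: (ord2_cases k) (ord2_cases i) => -> [] ->; rewrite /dcoset_reps /= !inE.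
- case/or4P => /eqP ->.
  + sandwich_by (@nil 'I_2) (@nil 'I_2) s0 3%N e0e0.
  + sandwich_by (@nil 'I_2) (@nil 'I_2) s0 2%N e0r1e0.
  + sandwich_by (@nil 'I_2) (@nil 'I_2) s0 2%N e0r1r0r1e0.
  + sandwich_by (@nil 'I_2) (@nil 'I_2) s0 3%N e0r1r0r1r0r1e0.
- case/or3P => /eqP ->.
  + sandwich_by (@nil 'I_2) [:: s1; s0] s0 0%N e0e1.
  + sandwich_by (@nil 'I_2) [:: s1; s0] s0 1%N e0r1r0e1.
  + sandwich_by (@nil 'I_2) [:: s1; s0] s0 0%N e0r1r0r1r0e1.
- case/or3P => /eqP ->.
  + sandwich_by [:: s0; s1] (@nil 'I_2) s0 0%N e1e0.
  + sandwich_by [:: s0; s1] (@nil 'I_2) s0 1%N e1r0r1e0.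
  + sandwich_by [:: s0; s1] (@nil 'I_2) s0 0%N e1r0r1r0r1e0.
- case/or4P => /eqP ->.
  + sandwich_by (@nil 'I_2) (@nil 'I_2) s1 1%N e1e1.
  + sandwich_by (@nil 'I_2) [:: s0; s1; s0; s1; s0] s1 0%N e1r0e1.
  + sandwich_by (@nil 'I_2) (@nil 'I_2) s1 0%N e1r0r1r0e1.
  + sandwich_by (@nil 'I_2) [:: s0; s1; s0; s1; s0] s1 1%N e1r0r1r0r1r0e1.
Qed.

Lemma dcoset_reps_cover k i u : exists x u0 y,
  [/\ x \in [:: [::]; [:: k]], u0 \in dcoset_reps k i, y \in [:: [::]; [:: i]]
    & dihedral_nf (x ++ u0 ++ y) = dihedral_nf u].
Proof.
have : has (fun x => has (fun u0 => has (fun y =>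
    dihedral_nf (x ++ u0 ++ y) == dihedral_nf u)
  [:: [::]; [:: i]]) (dcoset_reps k i)) [:: [::]; [:: k]].
  case: (ord2_cases k) (ord2_cases i) => -> [] ->;
  case: (dihedral_nf u) (dihedral_nf_lt6 u) => m [];
  by do 6 (case: m => [|m] //).
by case/hasP => x xk /hasP [u0 u0rep /hasP [y yi /eqP nfE]]; exists x, u0, y.
Qed.

Lemma sandwich_reduces_all k i u : sandwich_reduces k i u.
Proof.
have [x [u0 [y [xk u0rep yi nfE]]]] := dcoset_reps_cover k i u.
apply: sandwich_reduces_nf nfE _.
move/sandwich_reduces_reps: u0rep => red.
have redy : sandwich_reduces k i (u0 ++ y).
  move: yi; rewrite !inE => /orP [] /eqP ->; rewrite ?cats0 ?cats1 //.
  exact: sandwich_reduces_rcons.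
by move: xk; rewrite !inE => /orP [] /eqP -> //; apply: sandwich_reduces_cons.
Qed.

Theorem lemma9p6 :
  forall (beta : G2root), beta \in pos_roots ->
  forall (w : seq 'I_2) (k : 'I_2), wact w (simple_root k) = beta ->
  forall (i : 'I_2),
  exists (a1 a2 : seq 'I_2) (j : 'I_2) (t : int),
    forall (A : pzRingType) (d dinv r0 r1 e0 e1 : A),
      br_rels d dinv r0 r1 e0 e1 ->
      ebeta r0 r1 e0 e1 w k * gen e0 e1 i
      = dpow d dinv t * wev r0 r1 a1 * gen e0 e1 j * wev r0 r1 a2.
Proof.
move=> beta _ w k _ i.
have [a1 [a2 [j [n red]]]] := sandwich_reduces_all k i (rev w).
exists (w ++ a1), a2, j, n%:Z => A d dinv r0 r1 e0 e1 rels.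
rewrite /ebeta -2!mulrA (mulrA (gen e0 e1 k)) (red A d dinv r0 r1 e0 e1 rels) wev_cat /=.
by rewrite !mulrA (commrX n (commr_sym (dC rels _))).
Qed.
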